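(* For a positive integer $m$, let $M_1(m)$ be the number of ordinary partitions of $m$ in which the largest part occurs exactly once and every other part size that occurs, occurs exactly twice. Let $M_2(m)$ be the number of partitions of $m$ with $n$ copies of $n$ in which, with parts in ascending lexicographic order, the weighted difference between each part and the preceding one is $0$, and the smallest part is of the form $j_j$. Then $M_1(m)=M_2(m)$.
   Context: $M=\{m_i: 1\le i\le m\}$; a partition with $n$ copies of $n$ is a finite multiset of elements of $M$ whose values (first entries) sum to the number partitioned. Lexicographic order: $m_i>n_j$ iff $m>n$, or $m=n$ and $i>j$. Weighted difference $((m_i-n_j))=m-n-i-j$. *)

From mathcomp Require Import all_boot all_algebra.
Set Implicit Arguments. Unset Strict Implicit. Unset Printing Implicit Defensive.
Import GRing.Theory Num.Theory.

Fixpoint seqs_upto (X : Type) (A : seq X) (n : nat) : seq (seq X) :=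
  if n is n'.+1 then [::] :: [seq x :: s | x <- A, s <- seqs_upto A n']
  else [:: [::]].

Definition is_partition (m : nat) (s : seq nat) : bool :=
  [&& all (fun x => 0 < x) s, sorted geq s & sumn s == m].

Definition M1_cond (s : seq nat) : bool :=
  let l := foldr maxn 0 s in
  (count_mem l s == 1) && all (fun x => (x != l) ==> (count_mem x s == 2)) s.

(* Every ordinary partition of m (as nonincreasing list) lies in this list exactly once. *)
Definition M1 (m : nat) : nat :=
  count (fun s => is_partition m s && M1_cond s) (seqs_upto (iota 1 m) m).

(* a part m_i is the pair (m, i) with 1 <= i <= m *)
Definition ncopy_part (p : nat * nat) : bool := (1 <= p.2 <= p.1).

Definition lexle (a b : nat * nat) : bool :=
  (a.1 < b.1) || ((a.1 == b.1) && (a.2 <= b.2)).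

Definition wdiff (a b : nat * nat) : int :=
  a.1%:Z - b.1%:Z - a.2%:Z - b.2%:Z.

(* partition of m with n copies of n, listed in ascending lexicographic order
   (the canonical representative of the multiset) *)
Definition is_ncopy_partition (m : nat) (s : seq (nat * nat)) : bool :=
  [&& all ncopy_part s, sorted lexle s & sumn (map fst s) == m].

Definition M2_cond (s : seq (nat * nat)) : bool :=
  sorted (fun a b => wdiff b a == 0) s &&
  (if s is p :: _ then p.1 == p.2 else false).

Definition ncopy_parts (m : nat) : seq (nat * nat) :=
  [seq (v, i) | v <- iota 1 m, i <- iota 1 v].

Definition M2 (m : nat) : nat :=
  count (fun s => is_ncopy_partition m s && M2_cond s) (seqs_upto (ncopy_parts m) m).

From mathcomp Require Import all_boot all_algebra.
From mathcomp Require Import zify.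

(* Both families of partitions are encoded by the same objects: nonempty
   strictly increasing sequences P = p_1 < ... < p_r of positive integers.
   - The M1 partition  x, y_1, y_1, ..., y_k, y_k  (x > y_1 > ... > y_k > 0)
     is the sequence x > y_1 > ... > y_k read backwards (the largest part is
     the unique single one, the others come in equal pairs).
   - The M2 partition attached to P has the parts (p_j + p_{j-1})_(p_j - p_{j-1})
     with p_0 = 0: the first part is (p_1)_(p_1), and consecutive parts have
     weighted difference 0.  Conversely p_j is recovered from a part m_i as
     (m + i)/2.
   Both partitions have weight 2(p_1 + ... + p_r) - p_r. *)

Lemma count_bij (T U : eqType) (l1 : seq T) (l2 : seq U) (p : pred T) (q : pred U)
    (f : T -> U) (g : U -> T) :
  uniq l1 -> uniq l2 ->
  (forall x, x \in l1 -> p x -> [/\ f x \in l2, q (f x) & g (f x) = x]) ->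
  (forall y, y \in l2 -> q y -> [/\ g y \in l1, p (g y) & f (g y) = y]) ->
  count p l1 = count q l2.
Proof.
move=> u1 u2 fK gK; rewrite -!size_filter -(size_map f).
apply: perm_size; apply: uniq_perm; last first.
- move=> y; apply/mapP/idP.
    move=> [x]; rewrite mem_filter => /andP[px xl] ->.
    by have [fl qf _] := fK x xl px; rewrite mem_filter qf fl.
  rewrite mem_filter => /andP[qy yl]; have [gl pg <-] := gK y yl qy.
  by exists (g y); rewrite // mem_filter pg gl.
- exact: filter_uniq.
rewrite map_inj_in_uniq ?filter_uniq // => x y; rewrite !mem_filter.
move=> /andP[px xl] /andP[py yl] fxy.
by have [_ _ <-] := fK x xl px; have [_ _ <-] := fK y yl py; rewrite fxy.
Qed.

Lemma mem_seqs_upto (X : eqType) (A : seq X) n s :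
  (s \in seqs_upto A n) = (size s <= n) && all (mem A) s.
Proof.
elim: n s => [|n IH] [|x t] //=; rewrite inE /=; apply/allpairsP/idP.
- by move=> [[y u]] /= [yA]; rewrite IH => /andP[su uA] [-> ->]; rewrite ltnS su yA.
- move=> /andP[st /andP[xA tA]]; exists (x, t); split => //.
  by rewrite IH -ltnS st.
Qed.

Lemma uniq_seqs_upto (X : eqType) (A : seq X) n : uniq A -> uniq (seqs_upto A n).
Proof.
move=> uA; elim: n => [|n IH] //=; apply/andP; split.
- by apply/negP => /allpairsP [[y u]] /= [].
- by apply: allpairs_uniq => // [[a b]] [c d] _ _ /= [-> ->].
Qed.

(* Size and entries of a list of positive integers are bounded by its sum;
   this places every partition of m inside the finite enumerations. *)
Lemma size_le_sumn s : all (fun x => 0 < x) s -> size s <= sumn s.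
Proof. by elim: s => //= x t IH /andP[x_gt0 /IH]; lia. Qed.

Lemma mem_le_sumn {s : seq nat} {x : nat} : x \in s -> x <= sumn s.
Proof. by elim: s => //= y t IH; rewrite inE => /orP[/eqP->|/IH]; lia. Qed.

Lemma mem_ncopy_parts m v i :
  ((v, i) \in ncopy_parts m) = (1 <= v <= m) && (1 <= i <= v).
Proof.
apply/allpairsPdep/idP.
- by move=> [a [b [+ + [-> ->]]]]; rewrite !mem_iota; lia.
- by move=> vi; exists v, i; rewrite !mem_iota; split => //; lia.
Qed.

Lemma uniq_ncopy_parts m : uniq (ncopy_parts m).
Proof.
apply: allpairs_uniq_dep; [exact: iota_uniq | by move=> *; exact: iota_uniq |].
by move=> [a b] [c d] _ _ /= [-> ->].
Qed.

Lemma partition_in_enum m s : is_partition m s -> s \in seqs_upto (iota 1 m) m.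
Proof.
move=> /and3P[pos _ /eqP sm]; rewrite mem_seqs_upto -{1}sm size_le_sumn //=.
apply/allP => x xs; have := allP pos x xs; have := mem_le_sumn xs.
by rewrite /= mem_iota; lia.
Qed.

Lemma ncopy_partition_in_enum m s :
  is_ncopy_partition m s -> s \in seqs_upto (ncopy_parts m) m.
Proof.
move=> /and3P[ncs _ /eqP sm]; rewrite mem_seqs_upto.
have pos : all (fun x => 0 < x) (map fst s).
  by rewrite all_map; apply/sub_all: ncs => a; rewrite /ncopy_part /=; lia.
rewrite -(size_map fst) -{1}sm size_le_sumn //=.
apply/allP => [[v i] vis]; rewrite /= mem_ncopy_parts.
have := allP ncs _ vis; have := mem_le_sumn (map_f fst vis).
by rewrite sm /ncopy_part /=; lia.
Qed.

Definition dec_chain (D : seq nat) : bool :=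
  [&& sorted gtn D, all (fun x => 0 < x) D & D != [::]].
Definition inc_chain (P : seq nat) : bool :=
  [&& sorted ltn P, all (fun x => 0 < x) P & P != [::]].

Lemma dec_chain_rev P : dec_chain (rev P) = inc_chain P.
Proof.
by rewrite /dec_chain /inc_chain rev_sorted all_rev -size_eq0 size_rev size_eq0.
Qed.

Fixpoint doubled {T : Type} (s : seq T) : seq T :=
  if s is x :: t then x :: x :: doubled t else [::].
Fixpoint undouble {T : Type} (s : seq T) : seq T :=
  match s with x :: _ :: t => x :: undouble t | [:: x] => [:: x] | [::] => [::] end.

Definition m1_of_chain (D : seq nat) : seq nat :=
  if D is x :: t then x :: doubled t else [::].
Definition chain_of_m1 (s : seq nat) : seq nat :=
  if s is x :: t then x :: undouble t else [::].

Lemma doubledK (T : Type) : cancel (@doubled T) (@undouble T).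
Proof. by elim=> //= x t ->. Qed.

Lemma mem_doubled (T : eqType) (t : seq T) : doubled t =i t.
Proof. by elim: t => //= y t IH x; rewrite !inE IH orbA orbb. Qed.

Lemma count_doubled (T : eqType) (t : seq T) x :
  count_mem x (doubled t) = (count_mem x t).*2.
Proof. by elim: t => //= y t ->; rewrite -addnn; lia. Qed.

Lemma sumn_doubled t : sumn (doubled t) = (sumn t).*2.
Proof. by elim: t => //= y t ->; rewrite -!addnn; lia. Qed.

Lemma path_doubled x t : path gtn x t -> path geq x (doubled t).
Proof.
elim: t x => //= y t IH x /andP[xy pt] /=.
by rewrite leqnn IH // andbT ltnW.
Qed.

Lemma foldr_maxn_head x t : path geq x t -> foldr maxn 0 (x :: t) = x.
Proof.
elim: t x => [|y t IH] x /=; first by rewrite maxn0.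
by move=> /andP[yx pt]; have /= -> := IH y pt; apply/maxn_idPl.
Qed.

Lemma undoubleK {t : seq nat} : sorted geq t -> all (fun y => count_mem y t == 2) t ->
  doubled (undouble t) = t /\ sorted gtn (undouble t).
Proof.
have [n] := ubnP (size t); elim: n t => // n IH [|y [|z t]] //= + st.
  by rewrite eqxx.
rewrite ltnS => sz /andP[/eqP cy call].
have [zy pt] := andP st.
have t_le_z : all (geq z) t by apply: order_path_min (rev_trans leq_trans) pt.
have ezy : z = y.
  have : y \in z :: t by rewrite -has_pred1 has_count; move: cy => /=; rewrite eqxx; lia.
  rewrite inE => /orP[/eqP-> //|/(allP t_le_z) /=]; lia.
subst z; rewrite eqxx /= in cy.
have ynt : y \notin t by apply/count_memPn/eqP; move/eqP: cy; rewrite !add1n.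
have t_lt_y w : w \in t -> w < y.
  move=> wt; rewrite ltn_neqAle (allP t_le_z w wt : w <= y) andbT.
  by apply: contraNneq ynt => <-.
have call2 : all (fun w => count_mem w t == 2) t.
  apply/allP => w wt; have /= := allP (proj2 (andP call)) w wt.
  by rewrite (gtn_eqF (t_lt_y w wt)).
have [dK sK] := IH t ltac:(lia) (path_sorted pt) call2.
split; first by rewrite dK.
rewrite /= (path_sortedE (rev_trans ltn_trans)) sK andbT.
by apply/allP => w; rewrite -mem_doubled dK => /t_lt_y.
Qed.

Definition is_M1 (m : nat) (s : seq nat) : bool := is_partition m s && M1_cond s.

Lemma m1_of_chainP D : dec_chain D ->
  is_M1 (sumn (m1_of_chain D)) (m1_of_chain D) /\ chain_of_m1 (m1_of_chain D) = D.
Proof.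
case: D => [|x t]; first by case/and3P.
move=> /and3P[/= sD /andP[x_gt0 t_gt0] _].
split; last by rewrite /= doubledK.
have t_lt_x : all (gtn x) t by apply: order_path_min (rev_trans ltn_trans) sD.
have pD : path geq x (doubled t) by apply: path_doubled.
have xnt : x \notin t by apply/negP => /(allP t_lt_x); rewrite /= ltnn.
have ut : uniq t.
  by apply: (sorted_uniq (rev_trans ltn_trans)) (path_sorted sD) => a; rewrite /= ltnn.
rewrite /is_M1 /is_partition /M1_cond foldr_maxn_head // /= x_gt0 pD !eqxx.
rewrite count_doubled (count_memPn xnt) /= !andbT; apply/andP; split.
- by apply/allP => y; rewrite mem_doubled => /(allP t_gt0).
- apply/allP => y; rewrite mem_doubled => yt; apply/implyP => yx.
  by rewrite count_doubled (count_uniq_mem _ ut) yt (eq_sym x) (negbTE yx).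
Qed.

Lemma chain_of_m1P {m : nat} {s : seq nat} : is_M1 m s ->
  dec_chain (chain_of_m1 s) /\ m1_of_chain (chain_of_m1 s) = s.
Proof.
case: s => [|x t]; first by rewrite /is_M1 /M1_cond /= andbF.
move=> /andP[/and3P[/= /andP[x_gt0 t_gt0] st _] /andP[/eqP cx call]].
rewrite foldr_maxn_head // /= eqxx add1n in cx call; case: cx => cx.
have xnt : x \notin t by apply/count_memPn.
have t_lt_x w : w \in t -> w < x.
  move=> wt; have w_le_x : w <= x :=
    allP (order_path_min (rev_trans leq_trans) st) w wt.
  by rewrite ltn_neqAle w_le_x andbT; apply: contraNneq xnt => <-.
have call2 : all (fun w => count_mem w t == 2) t.
  apply/allP => w wt; have w_lt_x := t_lt_x w wt.
  by have /= := allP call w wt; rewrite (ltn_eqF w_lt_x) (gtn_eqF w_lt_x).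
have [dK sK] := undoubleK (path_sorted st) call2.
split; last by rewrite /= dK.
rewrite /dec_chain /= x_gt0 (path_sortedE (rev_trans ltn_trans)) sK !andbT /=.
apply/andP; split; apply/allP => w; rewrite -mem_doubled dK.
- exact: t_lt_x.
- exact: (allP t_gt0).
Qed.

Fixpoint m2_parts (q : nat) (P : seq nat) : seq (nat * nat) :=
  if P is p :: t then (q + p, p - q) :: m2_parts p t else [::].
Definition m2_of_chain (P : seq nat) : seq (nat * nat) := m2_parts 0 P.

Definition level (a : nat * nat) : nat := (a.1 + a.2)./2.
Definition chain_of_m2 (s : seq (nat * nat)) : seq nat := map level s.

Definition zero_wdiff (a b : nat * nat) : bool := wdiff b a == 0%R.

Lemma zero_wdiffE a b : zero_wdiff a b = (b.1 == a.1 + b.2 + a.2).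
Proof. by rewrite /zero_wdiff /wdiff; apply/eqP/eqP; lia. Qed.

Lemma level_part {q p : nat} : q <= p -> level (q + p, p - q) = p.
Proof.
by move=> qp; rewrite /level /= (_ : _ + _ = p.*2) ?half_double // -addnn; lia.
Qed.

Lemma level_diag p : level (p, p) = p.
Proof. by rewrite /level addnn half_double. Qed.

Lemma m2_partsP {q p : nat} {P : seq nat} : q < p -> path ltn p P ->
  [/\ path lexle (q + p, p - q) (m2_parts p P),
      path zero_wdiff (q + p, p - q) (m2_parts p P),
      all ncopy_part (m2_parts p P) & map level (m2_parts p P) = P].
Proof.
elim: P q p => [|p' P IH] q p qp //= /andP[pp' pP].
have [lexP zeroP partsP levelP] := IH p p' pp' pP.
rewrite lexP zeroP partsP levelP (level_part (ltnW pp')) zero_wdiffE.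
rewrite /lexle /ncopy_part /= !andbT.
split => //; first (by apply/orP; left; lia); first by apply/eqP; lia.
by apply/andP; split; lia.
Qed.

Lemma m2_partsK {q p : nat} {s : seq (nat * nat)} : q <= p -> all ncopy_part s ->
  path zero_wdiff (q + p, p - q) s ->
  m2_parts p (map level s) = s /\ path ltn p (map level s).
Proof.
elim: s q p => [|[v i] s IH] q p qp //= /andP[vi_ok s_ok] /andP[hz ps].
rewrite zero_wdiffE /= in hz; move: vi_ok; rewrite /ncopy_part /= => /andP[i_gt0 _].
have ev : (v, i) = (p + (p + i), p + i - p) by congr pair; lia.
rewrite ev (level_part (leq_addr i p)); rewrite ev in ps.
have [mK pathK] := IH p (p + i) (leq_addr _ _) s_ok ps.
by rewrite mK pathK andbT; split => //; lia.
Qed.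

Definition is_M2 (m : nat) (s : seq (nat * nat)) : bool :=
  is_ncopy_partition m s && M2_cond s.

Lemma m2_of_chainP P : inc_chain P ->
  is_M2 (sumn (map fst (m2_of_chain P))) (m2_of_chain P) /\
  chain_of_m2 (m2_of_chain P) = P.
Proof.
case: P => [|p P]; first by case/and3P.
move=> /and3P[/= sP /andP[p_gt0 _] _].
have [lexP zeroP partsP levelP] := m2_partsP p_gt0 sP.
rewrite /m2_of_chain /chain_of_m2 /= add0n subn0 in lexP zeroP partsP *.
rewrite levelP level_diag; split => //.
rewrite /is_M2 /is_ncopy_partition /M2_cond /= lexP zeroP partsP.
by rewrite /ncopy_part /= p_gt0 leqnn !eqxx.
Qed.

Lemma chain_of_m2P {m : nat} {s : seq (nat * nat)} : is_M2 m s ->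
  inc_chain (chain_of_m2 s) /\ m2_of_chain (chain_of_m2 s) = s.
Proof.
case: s => [|[v i] s]; first by rewrite /is_M2 andbF.
move=> /andP[/and3P[/= /andP[vi_ok s_ok] _ _] /andP[zs /eqP evi]].
rewrite /= in evi; subst i.
have v_gt0 : 0 < v by case/andP: vi_ok.
have [mK pathK] := m2_partsK (leq0n v) s_ok ltac:(by rewrite add0n subn0).
rewrite /m2_of_chain /chain_of_m2 /inc_chain /= level_diag add0n subn0 mK pathK.
rewrite v_gt0 /= andbT.
split => //; apply/allP => w /(allP (order_path_min ltn_trans pathK)).
exact: leq_ltn_trans (leq0n v).
Qed.

Lemma sumn_m2_parts q P :
  sumn (map fst (m2_parts q P)) + last q P = q + (sumn P).*2.
Proof.
elim: P q => [|p P IH] q /=; first by rewrite addn0.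
by have := IH p; rewrite -!addnn; lia.
Qed.

Lemma sumn_m1_m2 P : sumn (m1_of_chain (rev P)) = sumn (map fst (m2_of_chain P)).
Proof.
case/lastP: P => [|P x] //; have := sumn_m2_parts 0 (rcons P x).
rewrite /m2_of_chain last_rcons rev_rcons /= sumn_doubled sumn_rev sumn_rcons.
by rewrite -!addnn; lia.
Qed.

Definition m2_of_m1 (s : seq nat) : seq (nat * nat) :=
  m2_of_chain (rev (chain_of_m1 s)).
Definition m1_of_m2 (t : seq (nat * nat)) : seq nat :=
  m1_of_chain (rev (chain_of_m2 t)).

Lemma m2_of_m1P {m : nat} {s : seq nat} :
  is_M1 m s -> is_M2 m (m2_of_m1 s) /\ m1_of_m2 (m2_of_m1 s) = s.
Proof.
move=> s_M1; have sm : sumn s = m by case/andP: s_M1 => /and3P[_ _ /eqP].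
have [Dc sK] := chain_of_m1P s_M1; set D := chain_of_m1 s in Dc sK *.
have [t_M2 tK] := m2_of_chainP (rev D) ltac:(by rewrite -dec_chain_rev revK).
rewrite -sumn_m1_m2 revK sK sm in t_M2.
by rewrite /m2_of_m1 /m1_of_m2 -/D tK revK sK.
Qed.

Lemma m1_of_m2P {m : nat} {t : seq (nat * nat)} :
  is_M2 m t -> is_M1 m (m1_of_m2 t) /\ m2_of_m1 (m1_of_m2 t) = t.
Proof.
move=> t_M2; have tm : sumn (map fst t) = m by case/andP: t_M2 => /and3P[_ _ /eqP].
have [Pc tK] := chain_of_m2P t_M2; set P := chain_of_m2 t in Pc tK *.
have [s_M1 sK] := m1_of_chainP (rev P) ltac:(by rewrite dec_chain_rev).
rewrite sumn_m1_m2 tK tm in s_M1.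
by rewrite /m1_of_m2 /m2_of_m1 -/P sK revK tK.
Qed.

Theorem corollary28 (m : nat) : 0 < m -> M1 m = M2 m.
Proof.
move=> _; apply: (@count_bij _ _ _ _ _ _ m2_of_m1 m1_of_m2).
- exact/uniq_seqs_upto/iota_uniq.
- exact/uniq_seqs_upto/uniq_ncopy_parts.
- move=> s _ /m2_of_m1P[t_M2 sK]; split => //.
  by apply: ncopy_partition_in_enum; case/andP: t_M2.
- move=> t _ /m1_of_m2P[s_M1 tK]; split => //.
  by apply: partition_in_enum; case/andP: s_M1.
Qed.
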